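(* Let $m,n$ be natural numbers with $\gcd(m,n)=1$. Then the lattice $\mathcal{J}_{mn}$ is isomorphic to the direct product of lattices $\mathcal{J}_m\times\mathcal{J}_n$.
   Context: For a natural number $k$, $\mathbb{Z}_k=\{0,\dots,k-1\}$. $P(\mathbb{Z}_k,+)$ denotes the clone of all polynomial operations of the group $(\mathbb{Z}_k,+)$ (operations of the form $a_0+a_1x_1+\dots+a_sx_s$), and $P(\mathbb{Z}_k,+,\cdot)$ denotes the clone of all polynomial operations of the ring $(\mathbb{Z}_k,+,\cdot)$. $\mathcal{J}_k$ denotes the interval $[P(\mathbb{Z}_k,+),P(\mathbb{Z}_k,+,\cdot)]$ in the lattice of all clones on the set $\mathbb{Z}_k$, i.e. the lattice of all clones $C$ with $P(\mathbb{Z}_k,+)\subseteq C\subseteq P(\mathbb{Z}_k,+,\cdot)$. *)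

From HB Require Import structures.
From mathcomp Require Import all_boot all_order all_algebra.
From mathcomp Require Import mpoly.
Set Implicit Arguments. Unset Strict Implicit. Unset Printing Implicit Defensive.
Import GRing.Theory.

(* Z_k = {0,...,k-1} is represented by the ordinal type 'I_k.
   An n-ary operation on Z_k. *)
Definition op (k n : nat) : Type := ('I_n -> 'I_k) -> 'I_k.

Definition opset (k : nat) : Type := forall n : nat, op k n -> Prop.

Definition comp_op (k n m : nat) (f : op k n) (g : 'I_n -> op k m) : op k m :=
  fun x => f (fun i => g i x).

Definition is_clone (k : nat) (C : opset k) : Prop :=
  [/\ forall f : op k 0, ~ C 0 f,
      forall n (i : 'I_n), C n (fun x => x i) &
      forall n m (f : op k n) (g : 'I_n -> op k m),
        C n f -> (forall i, C m (g i)) -> C m (comp_op f g)].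

Definition opset_sub (k : nat) (C D : opset k) : Prop :=
  forall n (f : op k n), C n f -> D n f.

Definition Pgroup (k : nat) : opset k :=
  fun n f => 0 < n /\ exists (a0 : nat) (a : 'I_n -> nat),
    forall x : 'I_n -> 'I_k,
      nat_of_ord (f x) = (a0 + \sum_(i < n) a i * x i) %% k.

Definition Pring (k : nat) : opset k :=
  fun n f => 0 < n /\ exists p : {mpoly int[n]},
    forall x : 'I_n -> 'I_k,
      (nat_of_ord (f x) : int) = (p.@[fun i => (nat_of_ord (x i) : int)] %% k)%Z.

Definition J (k : nat) : Type :=
  { C : opset k | is_clone C /\ opset_sub (@Pgroup k) C /\ opset_sub C (@Pring k) }.

Definition J_le (k : nat) (C D : J k) : Prop := opset_sub (sval C) (sval D).

(* Lattice isomorphism J_a ~= J_b x J_c (componentwise order on the product),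
   expressed as an order isomorphism: a bijection preserving and reflecting
   the order (for lattices this is the same as a lattice isomorphism). *)
Definition J_iso_prod (a b c : nat) : Prop :=
  exists phi : J a -> J b * J c,
    bijective phi /\
    forall C D : J a,
      J_le C D <-> (J_le (phi C).1 (phi D).1 /\ J_le (phi C).2 (phi D).2).

From mathcomp Require Import all_boot all_order all_algebra.
From mathcomp Require Import mpoly.
From Stdlib Require Import ProofIrrelevance FunctionalExtensionality.
From Stdlib Require Import PropExtensionality IndefiniteDescription.
Set Implicit Arguments. Unset Strict Implicit. Unset Printing Implicit Defensive.
Import GRing.Theory.

(* For d | k, reducing an operation of P(Z_k,+,.) modulo d gives an operation
   of P(Z_d,+,.), and this reduction commutes with composition; hence it maps
   clones of J_k to clones of J_d.  For k = d1 d2 with d1, d2 coprime, an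
   operation f of P(Z_k,+,.) is recovered from its two reductions f1, f2 by
   the affine operation (u, v) |-> e1 u + e2 v, where e1, e2 are the CRT
   idempotents; so a clone C of J_k contains f iff its reductions contain f1
   and f2.  Conversely a pair (A, B) of clones of J_d1 x J_d2 is glued to the
   clone of all polynomial operations whose reductions lie in A and B, and
   e1 * g lifts any g of A to an operation reducing to 0 modulo d2. *)

Lemma modz_dvdm (u : int) (k d : nat) : (d %| k)%N -> modz (modz u k) d = modz u d.
Proof.
move=> dvd_dk; apply/eqP; rewrite eqz_mod_dvd.
have -> : ((u %% k)%Z - u = - ((u %/ k)%Z * k))%R.
  by rewrite {2}(divz_eq u k) opprD addrCA subrr addr0.
by rewrite rpredN dvdz_mull // dvdzE.
Qed.

Lemma meval_congr_mod a (p : {mpoly int[a]}) (d : int) (x y : 'I_a -> int) :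
  (forall i, x i = y i %[mod d])%Z -> (p.@[x] = p.@[y] %[mod d])%Z.
Proof.
move=> Exy; rewrite !mevalE.
apply: (big_ind2 (fun u v => u = v %[mod d])%Z) => // [u1 u2 v1 v2 E1 E2|m _].
  by rewrite -modzDm E1 E2 modzDm.
suff Em : (\prod_i x i ^+ m i = \prod_i y i ^+ m i %[mod d])%Z.
  by rewrite -modzMmr Em modzMmr.
apply: (big_ind2 (fun u v => u = v %[mod d])%Z) => // [u1 u2 v1 v2 E1 E2|i _].
  by rewrite -modzMm E1 E2 modzMm.
by rewrite -modzXm Exy modzXm.
Qed.

Lemma Pring_proj k a (i : 'I_a) : @Pring k a (fun x => x i).
Proof.
split; first exact: leq_ltn_trans (ltn_ord i).
by exists 'X_i => x; rewrite mevalXU modz_nat modn_small.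
Qed.

Lemma Pgroup_cst k a (c : 'I_k) : (0 < a)%N -> @Pgroup k a (fun _ => c).
Proof.
move=> a_gt0; split => //; exists c, (fun _ => 0%N) => x.
by rewrite big1 // addn0 modn_small.
Qed.

Lemma Pgroup_Pring k a (f : op k a) : @Pgroup k a f -> @Pring k a f.
Proof.
case=> a_gt0 [a0 [c Ef]]; split => //.
exists ((a0%:Z)%:MP + \sum_(i < a) (c i)%:Z *: 'X_i)%R => x.
rewrite Ef -modz_nat mevalD mevalC raddf_sum /= PoszD; congr (modz (_ + _) _).
rewrite (big_morph Posz PoszD (erefl _)); apply: eq_bigr => i _.
by rewrite mevalZ mevalXU PoszM.
Qed.

Lemma Pring_comp k a b (f : op k a) (g : 'I_a -> op k b) :
  (0 < b)%N -> @Pring k a f -> (forall i, @Pring k b (g i)) ->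
  @Pring k b (comp_op f g).
Proof.
move=> b_gt0 [_ [p Ef]] Pg; split => //.
pose q i := proj1_sig (constructive_indefinite_description _ (proj2 (Pg i))).
have Eg i : forall x, (g i x : int) = modz (q i).@[fun j => (x j : int)] k :=
  proj2_sig (constructive_indefinite_description _ (proj2 (Pg i))).
exists (p \mPo [tuple q i | i < a]) => x.
rewrite Ef comp_mpoly_meval; apply: meval_congr_mod => i.
by rewrite tnth_mktuple Eg modz_mod.
Qed.

Definition in_J k (C : opset k) : Prop :=
  is_clone C /\ opset_sub (@Pgroup k) C /\ opset_sub C (@Pring k).

Lemma opset_ext k (C D : opset k) : (forall a f, C a f <-> D a f) -> C = D.
Proof.
move=> E; apply: functional_extensionality_dep => a.
by apply: functional_extensionality => f; apply: propositional_extensionality.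
Qed.

Lemma J_inj k (C D : J k) : sval C = sval D -> C = D.
Proof.
case: C D => [C HC] [D HD] /= ED; subst D.
by congr exist; apply: proof_irrelevance.
Qed.

Definition mod_ord n (n_gt0 : (0 < n)%N) {m} (x : 'I_m) : 'I_n :=
  Ordinal (ltn_pmod x n_gt0).

Section Reduction.
Variables (k d : nat) (k_gt0 : (0 < k)%N) (d_gt0 : (0 < d)%N).
Hypothesis dvd_dk : (d %| k)%N.

(* The arguments are reduced modulo k only to retype them from 'I_d to 'I_k. *)
Definition reduce_op a (f : op k a) : op d a :=
  fun y => mod_ord d_gt0 (f (mod_ord k_gt0 \o y)).

Lemma modn_ord_small (y : 'I_d) : (y %% k)%N = y.
Proof. by rewrite modn_small // (leq_trans (ltn_ord y) (dvdn_leq k_gt0 dvd_dk)). Qed.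

Lemma reduce_opE a (f : op k a) x :
  @Pring k a f -> reduce_op f (mod_ord d_gt0 \o x) = mod_ord d_gt0 (f x).
Proof.
case=> _ [p Ef]; apply: val_inj => /=; apply/eqP.
rewrite -eqz_nat -!modz_nat !Ef !modz_dvdm //; apply/eqP.
by apply: meval_congr_mod => i /=; rewrite !modz_nat modn_dvdm ?modn_mod.
Qed.

Lemma reduce_op_eq_mod a (f g : op k a) :
  @Pring k a f -> @Pring k a g -> reduce_op f = reduce_op g ->
  forall x, f x = g x %[mod d].
Proof.
move=> Pf Pg Efg x.
by rewrite -[LHS]/(val (mod_ord d_gt0 (f x))) -reduce_opE // Efg reduce_opE.
Qed.

Lemma reduce_op_proj a (i : 'I_a) : reduce_op (fun x => x i) = (fun y => y i).
Proof.
apply: functional_extensionality => y; apply: val_inj.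
by rewrite /= modn_ord_small modn_small.
Qed.

Lemma reduce_op_comp a b (f : op k a) (g : 'I_a -> op k b) :
  @Pring k a f -> (forall i, @Pring k b (g i)) ->
  reduce_op (comp_op f g) = comp_op (reduce_op f) (fun i => reduce_op (g i)).
Proof.
move=> Pf Pg; apply: functional_extensionality => y.
rewrite /comp_op; change (fun i => reduce_op (g i) y)
  with (mod_ord d_gt0 \o (fun i => g i (mod_ord k_gt0 \o y))).
by rewrite reduce_opE.
Qed.

Lemma reduce_op_Pring a (f : op k a) : @Pring k a f -> @Pring d a (reduce_op f).
Proof.
case=> a_gt0 [p Ef]; split => //; exists p => y /=.
rewrite -modz_nat Ef modz_dvdm //; congr (modz _ _); congr meval.
by apply: functional_extensionality => i; rewrite /= modn_ord_small.
Qed.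

Lemma reduce_op_Pgroup a (f : op k a) : @Pgroup k a f -> @Pgroup d a (reduce_op f).
Proof.
case=> a_gt0 [a0 [c Ef]]; split => //; exists a0, c => y /=.
rewrite Ef modn_dvdm //; congr ((_ + _) %% _)%N; apply: eq_bigr => i _.
by rewrite /= modn_ord_small.
Qed.

Lemma Pgroup_lift a (g : op d a) : @Pgroup d a g ->
  exists2 f, @Pgroup k a f & reduce_op f = g.
Proof.
case=> a_gt0 [a0 [c Eg]].
exists (fun x => Ordinal (ltn_pmod (a0 + \sum_(i < a) c i * x i) k_gt0)).
  by split => //; exists a0, c.
apply: functional_extensionality => y; apply: val_inj => /=.
rewrite modn_dvdm // Eg; congr ((_ + _) %% _)%N; apply: eq_bigr => i _.
by rewrite modn_ord_small.
Qed.

Definition reduce_opset (C : opset k) : opset d :=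
  fun a g => exists f, C a f /\ reduce_op f = g.

Lemma reduce_opset_in_J (C : opset k) : in_J C -> in_J (reduce_opset C).
Proof.
case=> [[C0 Cproj Ccomp] [CPgroup CPring]]; split; [split | split].
- by move=> g [f [/C0]].
- by move=> a i; exists (fun x => x i); rewrite reduce_op_proj.
- move=> a b g h [f [Cf <-]] Ch.
  pose f_ i := proj1_sig (constructive_indefinite_description _ (Ch i)).
  have [Cf_ Ef_] : (forall i, C b (f_ i)) /\ (fun i => reduce_op (f_ i)) = h.
    split=> [i|]; last apply: functional_extensionality => i;
      by case: (proj2_sig (constructive_indefinite_description _ (Ch i))).
  exists (comp_op f f_); split; first exact: Ccomp.
  by rewrite reduce_op_comp ?Ef_ // => [|i]; apply: CPring.
- by move=> a g /Pgroup_lift [f /CPgroup Cf <-]; exists f.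
- by move=> a g [f [/CPring Pf <-]]; exact: reduce_op_Pring.
Qed.

End Reduction.

Section Lifting.
Variables (k d d' : nat) (k_gt0 : (0 < k)%N) (d_gt0 : (0 < d)%N) (d'_gt0 : (0 < d')%N).
Hypotheses (k_eq : k = (d * d')%N) (coprime_dd' : coprime d d').

Lemma Pring_lift a (g : op d a) : @Pring d a g ->
  exists f, [/\ @Pring k a f, reduce_op k_gt0 d_gt0 f = g
              & reduce_op k_gt0 d'_gt0 f = fun _ => Ordinal d'_gt0].
Proof.
move=> Pg; have [a_gt0 [q Eg]] := Pg.
have dvd_dk : (d %| k)%N by rewrite k_eq dvdn_mulr.
have dvd_d'k : (d' %| k)%N by rewrite k_eq dvdn_mull.
pose e := chinese d d' 1 0.
have e_mod_d : e = 1 %[mod d] by apply: chinese_modl.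
have e_mod_d' : e = 0 %[mod d'] by apply: chinese_modr.
exists (fun x => Ordinal (ltn_pmod (e * g (mod_ord d_gt0 \o x)) k_gt0)); split.
- split => //; exists ((e%:Z) *: q)%R => x /=.
  rewrite -modz_nat mevalZ; apply/eqP; rewrite eqz_mod_dvd PoszM -mulrBr.
  have -> : Posz k = (Posz d' * Posz d)%R by rewrite k_eq mulnC PoszM.
  apply: dvdz_mul; first by rewrite dvdzE /dvdn e_mod_d' mod0n.
  rewrite -eqz_mod_dvd Eg modz_mod; apply/eqP.
  by apply: meval_congr_mod => i /=; rewrite !modz_nat modn_mod.
- apply: functional_extensionality => y; apply: val_inj => /=.
  have -> : mod_ord d_gt0 \o (mod_ord k_gt0 \o y) = y.
    apply: functional_extensionality => i; apply: val_inj.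
    by rewrite /= modn_dvdm ?modn_small.
  by rewrite modn_dvdm // -modnMml e_mod_d modnMml mul1n modn_small.
- apply: functional_extensionality => y; apply: val_inj => /=.
  by rewrite modn_dvdm // -modnMml e_mod_d' mod0n mul0n mod0n.
Qed.

End Lifting.

Lemma crt_mix_mod d e e' u v : e = 1 %[mod d] -> e' = 0 %[mod d] ->
  e * u + e' * v = u %[mod d].
Proof.
move=> Ee Ee'; rewrite -modnDm -modnMml Ee -(modnMml e') Ee' !mod0n.
by rewrite modnMml mul1n addn0 modn_mod.
Qed.

Section Gluing.
Variables (k d1 d2 : nat) (k_gt0 : (0 < k)%N) (d1_gt0 : (0 < d1)%N) (d2_gt0 : (0 < d2)%N).
Hypotheses (k_eq : k = (d1 * d2)%N) (coprime_d : coprime d1 d2).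

Let dvd_d1k : (d1 %| k)%N. Proof. by rewrite k_eq dvdn_mulr. Qed.
Let dvd_d2k : (d2 %| k)%N. Proof. by rewrite k_eq dvdn_mull. Qed.

Local Notation red1 := (reduce_op k_gt0 d1_gt0).
Local Notation red2 := (reduce_op k_gt0 d2_gt0).

Definition crt_coef (i : 'I_2) : nat :=
  if i == ord0 then chinese d1 d2 1 0 else chinese d1 d2 0 1.

Definition crt_op : op k 2 :=
  fun z => Ordinal (ltn_pmod (\sum_(i < 2) crt_coef i * z i) k_gt0).

Lemma crt_op_Pgroup : @Pgroup k 2 crt_op.
Proof. by split => //; exists 0%N, crt_coef. Qed.

Lemma crt_op_comp a (f g h : op k a) :
  @Pring k a f -> @Pring k a g -> @Pring k a h -> red1 g = red1 f -> red2 h = red2 f ->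
  f = comp_op crt_op (fun i => if i == ord0 then g else h).
Proof.
move=> Pf Pg Ph Egf Ehf; apply: functional_extensionality => x; apply: val_inj.
rewrite /= !big_ord_recl big_ord0 addn0 /crt_coef /= -(modn_small (ltn_ord (f x))).
have eqn_mod_k u v : (u == v %[mod k]) = (u == v %[mod d1]) && (u == v %[mod d2]).
  by rewrite k_eq chinese_remainder.
apply/eqP; rewrite eqn_mod_k; apply/andP; split; apply/eqP.
- rewrite crt_mix_mod ?chinese_modl //.
  exact: reduce_op_eq_mod.
- rewrite addnC crt_mix_mod ?chinese_modr //.
  exact: reduce_op_eq_mod.
Qed.

Lemma mem_clone_of_reductions (C : opset k) a (f : op k a) :
  in_J C -> @Pring k a f ->
  reduce_opset k_gt0 d1_gt0 C (red1 f) -> reduce_opset k_gt0 d2_gt0 C (red2 f) -> C a f.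
Proof.
case=> [[_ _ Ccomp] [CPgroup CPring]] Pf [g [Cg Egf]] [h [Ch Ehf]].
rewrite (crt_op_comp Pf (CPring _ _ Cg) (CPring _ _ Ch) Egf Ehf).
by apply: Ccomp => [|i]; [apply: CPgroup; exact: crt_op_Pgroup | case: ifP].
Qed.

Definition glue_opset (A : opset d1) (B : opset d2) : opset k :=
  fun a f => [/\ @Pring k a f, A a (red1 f) & B a (red2 f)].

Lemma glue_opset_in_J A B : in_J A -> in_J B -> in_J (glue_opset A B).
Proof.
case=> [[_ Aproj Acomp] [APgroup _]] [[_ Bproj Bcomp] [BPgroup _]].
split; [split | split].
- by move=> f [[]].
- by move=> a i; split; rewrite ?reduce_op_proj //; exact: Pring_proj.
- move=> a b f g [Pf Af Bf] Cg.
  have [b_gt0 _] : @Pring k b (g (Ordinal (proj1 Pf))) by case: (Cg (Ordinal (proj1 Pf))).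
  have Pg i : @Pring k b (g i) by case: (Cg i).
  rewrite /glue_opset (reduce_op_comp _ _ dvd_d1k Pf Pg).
  rewrite (reduce_op_comp _ _ dvd_d2k Pf Pg).
  split; first exact: Pring_comp.
    by apply: Acomp => // i; case: (Cg i).
  by apply: Bcomp => // i; case: (Cg i).
- move=> a f Pf; split; first exact: Pgroup_Pring.
    by apply: APgroup; exact: reduce_op_Pgroup.
  by apply: BPgroup; exact: reduce_op_Pgroup.
- by move=> a f [].
Qed.

Lemma reduce_glue_opset1 A B : in_J A -> in_J B ->
  reduce_opset k_gt0 d1_gt0 (glue_opset A B) = A.
Proof.
move=> [_ [_ APring]] [_ [BPgroup _]]; apply: opset_ext => a g; split.
  by case=> f [[_ Af _] <-].
move=> Ag; have Pg := APring _ _ Ag.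
have [f [Pf Ef1 Ef2]] := Pring_lift k_gt0 d1_gt0 d2_gt0 k_eq coprime_d Pg.
exists f; split => //; split; rewrite ?Ef1 ?Ef2 //.
by apply: BPgroup; apply: Pgroup_cst; case: Pg.
Qed.

Lemma reduce_glue_opset2 A B : in_J A -> in_J B ->
  reduce_opset k_gt0 d2_gt0 (glue_opset A B) = B.
Proof.
move=> [_ [APgroup _]] [_ [_ BPring]]; apply: opset_ext => a g; split.
  by case=> f [[_ _ Bf] <-].
move=> Bg; have Pg := BPring _ _ Bg.
have k_eq' : k = (d2 * d1)%N by rewrite k_eq mulnC.
have coprime_d' : coprime d2 d1 by rewrite coprime_sym.
have [f [Pf Ef2 Ef1]] := Pring_lift k_gt0 d2_gt0 d1_gt0 k_eq' coprime_d' Pg.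
exists f; split => //; split; rewrite ?Ef1 ?Ef2 //.
by apply: APgroup; apply: Pgroup_cst; case: Pg.
Qed.

Lemma glue_reduce_opset C : in_J C ->
  glue_opset (reduce_opset k_gt0 d1_gt0 C) (reduce_opset k_gt0 d2_gt0 C) = C.
Proof.
move=> JC; apply: opset_ext => a f; split.
  by case=> Pf C1 C2; apply: mem_clone_of_reductions.
by move=> Cf; split; [exact: JC.2.2 _ _ Cf | exists f | exists f].
Qed.

Definition J_split (C : J k) : J d1 * J d2 :=
  (exist _ _ (reduce_opset_in_J k_gt0 d1_gt0 dvd_d1k (svalP C)),
   exist _ _ (reduce_opset_in_J k_gt0 d2_gt0 dvd_d2k (svalP C))).

Definition J_glue (AB : J d1 * J d2) : J k :=
  exist _ _ (glue_opset_in_J (svalP AB.1) (svalP AB.2)).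

Lemma J_iso_prod_coprime : J_iso_prod k d1 d2.
Proof.
exists J_split; split.
  exists J_glue => [C | [A B]]; rewrite /J_glue /J_split.
    by apply: J_inj; rewrite /= glue_reduce_opset //; exact: svalP.
  by congr pair; apply: J_inj; rewrite /= (reduce_glue_opset1, reduce_glue_opset2) //;
    exact: svalP.
move=> C D; split.
  by move=> CD; split=> a g [f [Cf <-]]; exists f; split => //; apply: CD.
case=> le1 le2 a f Cf; apply: mem_clone_of_reductions (svalP D) _ _ _.
- exact: (svalP C).2.2 _ _ Cf.
- by apply: le1; exists f.
- by apply: le2; exists f.
Qed.

End Gluing.

Lemma Pring_in_J k : in_J (@Pring k).
Proof.
split; [split | split].
- by move=> f [].
- exact: Pring_proj.
- move=> a b f g Pf Pg; apply: Pring_comp => //.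
  by case: (Pg (Ordinal (proj1 Pf))).
- exact: Pgroup_Pring.
- by [].
Qed.

Definition J_top k : J k := exist _ _ (Pring_in_J k).

Lemma J1_trivial (C : J 1) : C = J_top 1.
Proof.
apply: J_inj; case: C => C [_ [CPgroup CPring]] /=.
apply: opset_ext => a f; split; first exact: CPring.
case=> a_gt0 _; apply: CPgroup; rewrite (_ : f = fun _ => ord0); first exact: Pgroup_cst.
by apply: functional_extensionality => x; apply: ord_inj; case: (f x) => [[]].
Qed.

Lemma J_iso_prod_1r k : J_iso_prod k k 1.
Proof.
exists (fun C => (C, J_top 1)); split; last by move=> C D; split=> [CD | [CD _]] //; split.
by exists fst => // [[C D]]; rewrite (J1_trivial D).
Qed.

Lemma J_iso_prod_1l k : J_iso_prod k 1 k.
Proof.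
exists (fun C => (J_top 1, C)); split; last by move=> C D; split=> [CD | [CD _]] //; split.
by exists snd => // [[C D]]; rewrite (J1_trivial C).
Qed.

Theorem lemma1p1 (m n : nat) (Hcop : coprime m n) : J_iso_prod (m * n) m n.
Proof.
case: m Hcop => [|m]; first by rewrite /coprime gcd0n => /eqP ->; exact: J_iso_prod_1r.
case: n => [|n]; first by rewrite /coprime gcdn0 => /eqP [->]; exact: J_iso_prod_1l.
by apply: J_iso_prod_coprime.
Qed.
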